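(* Let $k\ge 2$ and let $U_k$ be the binary matrix whose columns are indexed by the integers $1,\dots,2^k-1$ and whose rows are indexed by those integers $r\in\{1,\dots,2^k-1\}$ that are not powers of $2$ (so $U_k$ has $2^k-1-k$ rows), where the row indexed by $r$, with $2^t<r<2^{t+1}$ for the integer $t$, has its $1$-entries exactly in the columns indexed by $r$, $r-2^t$ and $2^t$. Then $u(U_k)=\varepsilon(U_k)=2^{k-1}$.
   Context: All matrices are binary. For a nonempty set $S$ of columns of a binary matrix, let $z$ be the sum over the integers of the columns in $S$. $S$ is called $1$-free if no entry of $z$ equals $1$, and even if all entries of $z$ are even. For a binary $m\times n$ matrix $A$ with $m<n$: $\varepsilon(A)$ is the smallest cardinality of a nonempty even set of columns of $A$, and $u(A)$ is the smallest cardinality of a nonempty $1$-free set of columns of $A$. *)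

From mathcomp Require Import all_boot.
Set Implicit Arguments. Unset Strict Implicit. Unset Printing Implicit Defensive.

Section BinMat.
Variables (Rw Cl : finType) (A : Rw -> Cl -> bool).

Definition colsum (S : {set Cl}) (r : Rw) : nat := \sum_(c in S) (A r c : nat).

Definition one_free (S : {set Cl}) : bool := [forall r, colsum S r != 1].
Definition even_set (S : {set Cl}) : bool := [forall r, ~~ odd (colsum S r)].

(* smallest cardinality of a nonempty even / 1-free set of columns
   (default #|Cl|.+1 if there is none; never happens when #rows < #cols) *)
Definition eps : nat :=
  \big[minn/#|Cl|.+1]_(S : {set Cl} | (S != set0) && even_set S) #|S|.
Definition ufree : nat :=
  \big[minn/#|Cl|.+1]_(S : {set Cl} | (S != set0) && one_free S) #|S|.
End BinMat.

Definition is_pow2 (r : nat) : bool := r == 2 ^ trunc_log 2 r.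

Definition Ucol (k : nat) := {c : 'I_(2 ^ k) | c != 0 :> nat}.
Definition Urow (k : nat) := {r : 'I_(2 ^ k) | (r != 0 :> nat) && ~~ is_pow2 r}.

Definition U (k : nat) (r : Urow k) (c : Ucol k) : bool :=
  let rr := val (val r) in let cc := val (val c) in
  let t := trunc_log 2 rr in
  [|| cc == rr, cc == rr - 2 ^ t | cc == 2 ^ t].

From mathcomp Require Import all_boot all_order zify.
Import Order.TTheory.

(* Identify a column set S with its indicator P on 1 .. 2^k-1.  The row
   2^t + a (0 < a < 2^t) has column sum P a + P (2^t) + P (2^t + a), so S is
   1-free iff no such triple meets S in exactly one column.  Split [1, 2m) at
   m = 2^t: if m is in S, each pair (a, m + a) must meet S, so |S| >= m;
   otherwise P (m + a) = P a, the lower half is nonempty, and induction gives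
   |S| >= 2 * m/2.  Conversely the columns >= 2^(k-1) form an even set: row
   2^t + a meets it in no column when t < k-1, and in the two columns 2^t and
   2^t + a when t = k-1. *)

Lemma bigminn_attained (I : finType) (P : pred I) (F : I -> nat) x i0 :
  P i0 -> F i0 <= x -> (forall i, P i -> F i0 <= F i) ->
  \big[minn/x]_(i | P i) F i = F i0.
Proof.
move=> Pi0 le_x le_F; apply/eqP; rewrite eqn_leq; apply/andP; split.
  exact: (bigmin_le_cond (T := nat)).
exact: (le_bigmin (T := nat)).
Qed.

Lemma even_set_one_free (Rw Cl : finType) (A : Rw -> Cl -> bool) S :
  even_set A S -> one_free A S.
Proof.
move=> /forallP S_even; apply/forallP => r.
by have := S_even r; case: (colsum A S r) => [|[]].
Qed.

Lemma sum_nat_eq1 x m n : m <= x < n -> \sum_(m <= i < n) (x == i : nat) = 1.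
Proof.
move=> x_in; rewrite (bigD1_seq x) ?mem_index_iota ?iota_uniq //= eqxx.
by rewrite big1 // => i /negbTE; rewrite eq_sym => ->.
Qed.

Lemma sum_nat_halves (F : nat -> nat) m : 0 < m ->
  \sum_(1 <= n < m + m) F n = \sum_(1 <= a < m) (F a + F (m + a)) + F m.
Proof.
move=> m_gt0; rewrite big_split /= (@big_cat_nat _ _ _ m) ?leq_addr //=.
rewrite -addnA; congr (_ + _).
rewrite -{1}(add0n m) big_addn addnK big_ltn // addnC.
by congr (_ + _); apply: eq_bigr => a _; rewrite addnC.
Qed.

Lemma trunc_log2_add t a : a < 2 ^ t -> trunc_log 2 (2 ^ t + a) = t.
Proof. by move=> a_lt; apply: trunc_log_eq => //; rewrite expnS; lia. Qed.

Definition dyadic_one_free (P : nat -> bool) (j : nat) :=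
  forall t a, t < j -> 0 < a < 2 ^ t -> P a + P (2 ^ t) + P (2 ^ t + a) != 1.

Lemma dyadic_one_free_count (P : nat -> bool) j :
  dyadic_one_free P j.+1 -> 0 < \sum_(1 <= n < 2 ^ j.+1) P n ->
  2 ^ j <= \sum_(1 <= n < 2 ^ j.+1) P n.
Proof.
elim: j => [|j IH] freeP; first by rewrite big_nat1.
set m := 2 ^ j.+1; have m_gt0 : 0 < m by rewrite expn_gt0.
have triple a : 0 < a < m -> P a + P m + P (m + a) != 1 by apply: freeP.
rewrite expnS mul2n -addnn -/m sum_nat_halves //.
case Pm: (P m) => /= in triple *.
  have pair_hit a : 1 <= a < m -> 1 <= P a + P (m + a).
    by move=> a_in; have := triple a a_in; case: (P a); case: (P (m + a)).
  have : \sum_(1 <= a < m) 1 <= \sum_(1 <= a < m) (P a + P (m + a)).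
    by rewrite big_nat [X in _ <= X]big_nat; apply: leq_sum.
  rewrite sum_nat_const_nat muln1; lia.
have copy a : 1 <= a < m -> P a + P (m + a) = 2 * P a.
  by move=> a_in; have := triple a a_in; case: (P a); case: (P (m + a)).
rewrite addn0 (eq_big_nat _ _ copy) -big_distrr /= muln_gt0 /= => pos.
rewrite {1}/m expnS leq_pmul2l //; apply: IH => // t a t_lt; apply: freeP; lia.
Qed.

Section DyadicMatrix.
Variable k : nat.

Definition colval (c : Ucol k) : nat := val (val c).
Definition rowval (r : Urow k) : nat := val (val r).

Lemma colval_inj : injective colval.
Proof. by move=> c d /val_inj /val_inj. Qed.

Lemma colval_range c : 0 < colval c < 2 ^ k.
Proof. by case: c => [[c c_lt] /= c_neq0]; rewrite /colval /= lt0n c_neq0. Qed.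

Lemma exists_col {n} : 0 < n < 2 ^ k -> exists c, colval c = n.
Proof.
by case/andP=> n_gt0 n_lt; exists (exist _ (Ordinal n_lt) (lt0n_neq0 n_gt0)).
Qed.

Lemma rowval_dyadic r :
  let t := trunc_log 2 (rowval r) in 2 ^ t < rowval r < 2 ^ t.+1 /\ t < k.
Proof.
move=> t; have /andP[r_neq0 r_npow2] := valP r.
have r_lt : rowval r < 2 ^ k := ltn_ord _.
have t_le : 2 ^ t <= rowval r by apply: trunc_logP; rewrite // lt0n.
have r_ltS : rowval r < 2 ^ t.+1 by apply: trunc_log_ltn.
split; first by rewrite ltn_neqAle t_le eq_sym r_npow2.
by rewrite -(ltn_exp2l _ _ (isT : 1 < 2)); lia.
Qed.

Lemma exists_row {t a} : t < k -> 0 < a < 2 ^ t -> exists r, rowval r = 2 ^ t + a.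
Proof.
move=> t_lt a_in; have log_ta := @trunc_log2_add t a (proj2 (andP a_in)).
have ta_lt : 2 ^ t + a < 2 ^ k.
  by have := leq_pexp2l (isT : 0 < 2) t_lt; rewrite expnS; lia.
have ta_row : (2 ^ t + a != 0) && ~~ is_pow2 (2 ^ t + a).
  by rewrite /is_pow2 log_ta; apply/andP; split; apply/eqP; lia.
by exists (exist _ (Ordinal ta_lt) ta_row).
Qed.

Definition has_col (S : {set Ucol k}) n : bool := [exists c in S, colval c == n].

Lemma sum_colval_eq (S : {set Ucol k}) n :
  \sum_(c in S) (colval c == n : nat) = has_col S n.
Proof.
rewrite /has_col; case: existsP => [[c /andP[cS /eqP <-]]|no_c].
  rewrite (bigD1 c) //= eqxx big1 // => d /andP[_ /negbTE].
  by rewrite (inj_eq colval_inj) => ->.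
rewrite big1 // => d dS; case: eqP => // dn.
by case: no_c; exists d; rewrite dS dn /=.
Qed.

Lemma card_has_col (S : {set Ucol k}) : #|S| = \sum_(1 <= n < 2 ^ k) has_col S n.
Proof.
under eq_bigr do rewrite -sum_colval_eq.
rewrite exchange_big /= -sum1_card; apply: eq_bigr => c _.
by rewrite sum_nat_eq1 ?colval_range.
Qed.

Lemma colsum_U (S : {set Ucol k}) r :
  let t := trunc_log 2 (rowval r) in
  colsum (@U k) S r =
    has_col S (rowval r) + has_col S (rowval r - 2 ^ t) + has_col S (2 ^ t).
Proof.
move=> t; have [/andP[t_lt r_ltS] _] := rowval_dyadic r.
rewrite /colsum -!sum_colval_eq -!big_split; apply: eq_bigr => c _ /=.
rewrite /U -/(rowval r) -/t -/(colval c) -/t expnS in t_lt r_ltS *.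
by do 3 case: eqP => ? //=; lia.
Qed.

Lemma one_free_dyadic (S : {set Ucol k}) :
  one_free (@U k) S -> dyadic_one_free (has_col S) k.
Proof.
move=> /forallP S_free t a t_lt a_in; have [r r_val] := exists_row t_lt a_in.
have := S_free r; rewrite colsum_U r_val trunc_log2_add ?addKn; last by case/andP: a_in.
by rewrite -addnA addnC.
Qed.

Lemma one_free_card_ge (S : {set Ucol k}) :
  0 < k -> S != set0 -> one_free (@U k) S -> 2 ^ k.-1 <= #|S|.
Proof.
move=> k_gt0 S_neq0 S_free; rewrite card_has_col.
have := @dyadic_one_free_count (has_col S) k.-1; rewrite prednK //; apply.
  exact: one_free_dyadic.
by rewrite -card_has_col card_gt0.
Qed.

Definition top_half : {set Ucol k} := [set c | 2 ^ k.-1 <= colval c].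

Lemma has_col_top_half n : 0 < n < 2 ^ k -> has_col top_half n = (2 ^ k.-1 <= n).
Proof.
move=> n_in; apply/existsP/idP => [[c /andP[]]|n_top].
  by rewrite inE => c_top /eqP <-.
by have [c c_val] := exists_col n_in; exists c; rewrite inE c_val n_top eqxx.
Qed.

Lemma card_top_half : 0 < k -> #|top_half| = 2 ^ k.-1.
Proof.
move=> k_gt0; have pow_gt0 : 0 < 2 ^ k.-1 by rewrite expn_gt0.
have pow_k : 2 ^ k = 2 ^ k.-1 + 2 ^ k.-1 by rewrite addnn -mul2n -expnS prednK.
rewrite card_has_col; under eq_big_nat => n n_in do rewrite has_col_top_half //.
rewrite (@big_cat_nat _ _ _ (2 ^ k.-1)) /=; try lia.
rewrite big_nat big1 => [|n /andP[_ n_lt]]; last by rewrite leqNgt n_lt.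
rewrite big_nat (eq_bigr (fun=> 1)) => [|n /andP[-> _] //].
by rewrite -big_nat sum_nat_const_nat; lia.
Qed.

Lemma even_top_half : 0 < k -> even_set (@U k) top_half.
Proof.
move=> k_gt0; apply/forallP => r; rewrite colsum_U.
have [/andP[t_lt r_ltS] t_ltk] := rowval_dyadic r.
set t := trunc_log 2 _ in t_lt r_ltS t_ltk *.
have r_lt : rowval r < 2 ^ k := ltn_ord _.
have t_le : 2 ^ t <= 2 ^ k.-1 by rewrite leq_exp2l //; lia.
have t_pos : 0 < 2 ^ t by rewrite expn_gt0.
rewrite expnS in r_ltS.
rewrite !has_col_top_half; try (apply/andP; split; lia).
have -> : (2 ^ k.-1 <= rowval r - 2 ^ t) = false by apply/negbTE; rewrite -ltnNge; lia.
have -> : (2 ^ k.-1 <= rowval r) = (2 ^ k.-1 <= 2 ^ t).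
  apply/idP/idP => [r_top|]; last by lia.
  by rewrite leq_exp2l // -ltnS -(ltn_exp2l _ _ (isT : 1 < 2)) expnS; lia.
by rewrite addn0 addnn odd_double.
Qed.

End DyadicMatrix.

Theorem mainTheorem5 (k : nat) (hk : 2 <= k) :
  ufree (@U k) = 2 ^ k.-1 /\ eps (@U k) = 2 ^ k.-1.
Proof.
have k_gt0 : 0 < k by lia.
have top_neq0 : top_half k != set0 by rewrite -card_gt0 card_top_half ?expn_gt0.
have top_le : #|top_half k| <= #|{: Ucol k}|.+1 by rewrite ltnW // ltnS max_card.
have top_even := even_top_half k k_gt0.
rewrite /ufree /eps -(card_top_half k k_gt0).
split; apply: bigminn_attained; rewrite ?top_neq0 ?top_even ?even_set_one_free //.
  by move=> S /andP[S_neq0 S_free]; rewrite card_top_half ?one_free_card_ge.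
move=> S /andP[S_neq0 /even_set_one_free S_free].
by rewrite card_top_half ?one_free_card_ge.
Qed.
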